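(* Let $X$ be a real Hilbert space, $I$ a finite index set, and $(T_i)_{i\in I}$ averaged nonexpansive, boundedly linearly regular operators $X\to X$ with $Z_i=\operatorname{Fix}T_i$, $Z=\bigcap_iZ_i\ne\varnothing$, and $(Z_i)_{i\in I}$ boundedly linearly regular. Let $(\pi_i)_{i\in I}$ be probabilities with $\pi_i>0$ and $\sum_i\pi_i=1$. Let $x_0\in X$ and generate $x_{n+1}=T_{i_n}x_n$ where the indices $i_n$ are chosen independently with $\mathbb P(i_n=i)=\pi_i$. Then there is a constant $\theta<1$, depending only on $x_0$ (and the data $(T_i),(\pi_i)$), such that for every $n\in\mathbb N$, $\mathbf E\big[d_Z^2(x_{n+1})\mid x_n\big]\le\theta\,d_Z^2(x_n)$.
   Context: $T$ is averaged nonexpansive if $T=(1-\lambda)\mathrm{Id}+\lambda N$ with $\lambda\in[0,1[$ and $N$ nonexpansive; boundedly linearly regular (operator) if for each $\rho>0$ there is $\kappa\ge0$ with $d_{\operatorname{Fix}T}(x)\le\kappa\|x-Tx\|$ for all $\|x\|\le\rho$. A finite family $(C_i)$ of closed convex sets with $C=\bigcap_iC_i\ne\varnothing$ is boundedly linearly regular if for every $\rho>0$ there is $\mu>0$ with $d_C(x)\le\mu\max_id_{C_i}(x)$ for all $\|x\|\le\rho$. *)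

From Stdlib Require Import Reals Lra List ClassicalEpsilon.
Open Scope R_scope.

Record HilbertSpace := mkHilbert {
  hcar :> Type;
  hzero : hcar;
  hadd : hcar -> hcar -> hcar;
  hopp : hcar -> hcar;
  hscal : R -> hcar -> hcar;
  hinner : hcar -> hcar -> R;
  hadd_assoc : forall x y z, hadd x (hadd y z) = hadd (hadd x y) z;
  hadd_comm : forall x y, hadd x y = hadd y x;
  hadd_zero : forall x, hadd x hzero = x;
  hadd_opp : forall x, hadd x (hopp x) = hzero;
  hscal_one : forall x, hscal 1 x = x;
  hscal_assoc : forall a b x, hscal a (hscal b x) = hscal (a * b) x;
  hscal_distr_l : forall a x y, hscal a (hadd x y) = hadd (hscal a x) (hscal a y);
  hscal_distr_r : forall a b x, hscal (a + b) x = hadd (hscal a x) (hscal b x);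
  hinner_sym : forall x y, hinner x y = hinner y x;
  hinner_add_l : forall x y z, hinner (hadd x y) z = hinner x z + hinner y z;
  hinner_scal_l : forall a x y, hinner (hscal a x) y = a * hinner x y;
  hinner_pos : forall x, 0 <= hinner x x;
  hinner_def : forall x, hinner x x = 0 -> x = hzero;
  hcomplete : forall u : nat -> hcar,
    (forall eps, 0 < eps -> exists N, forall p q, (N <= p)%nat -> (N <= q)%nat ->
       sqrt (hinner (hadd (u p) (hopp (u q))) (hadd (u p) (hopp (u q)))) < eps) ->
    exists l, forall eps, 0 < eps -> exists N, forall n, (N <= n)%nat ->
       sqrt (hinner (hadd (u n) (hopp l)) (hadd (u n) (hopp l))) < eps
}.

Arguments hzero {h}. Arguments hadd {h}. Arguments hopp {h}.
Arguments hscal {h}. Arguments hinner {h}.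

Section Defs.
Context {X : HilbertSpace}.

Definition hsub (x y : X) : X := hadd x (hopp y).
Definition hnorm (x : X) : R := sqrt (hinner x x).

Definition is_glb (S : R -> Prop) (d : R) : Prop :=
  (forall r, S r -> d <= r) /\ (forall b, (forall r, S r -> b <= r) -> b <= d).

(** Distance to a set: d_C(x) = inf { ||x - c|| : c in C }
    (well defined whenever C is nonempty). *)
Definition dist_set (C : X -> Prop) (x : X) : R :=
  epsilon (inhabits 0)
    (fun d => is_glb (fun r => exists c, C c /\ r = hnorm (hsub x c)) d).

Definition nonexpansive (N : X -> X) : Prop :=
  forall x y, hnorm (hsub (N x) (N y)) <= hnorm (hsub x y).

Definition averaged_nonexpansive (T : X -> X) : Prop :=
  exists (lam : R) (N : X -> X), 0 <= lam < 1 /\ nonexpansive N /\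
    forall x, T x = hadd (hscal (1 - lam) x) (hscal lam (N x)).

Definition Fix (T : X -> X) : X -> Prop := fun x => T x = x.

Definition bdd_lin_regular_op (T : X -> X) : Prop :=
  forall rho, 0 < rho -> exists kappa, 0 <= kappa /\
    forall x, hnorm x <= rho -> dist_set (Fix T) x <= kappa * hnorm (hsub x (T x)).

Definition inter_family (m : nat) (C : nat -> X -> Prop) : X -> Prop :=
  fun x => forall i, (i < m)%nat -> C i x.

Definition max_family (m : nat) (f : nat -> R) : R :=
  fold_right Rmax 0 (map f (seq 0 m)).

Definition sum_family (m : nat) (f : nat -> R) : R :=
  fold_right Rplus 0 (map f (seq 0 m)).

Definition bdd_lin_regular_family (m : nat) (C : nat -> X -> Prop) : Prop :=
  forall rho, 0 < rho -> exists mu, 0 < mu /\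
    forall x, hnorm x <= rho ->
      dist_set (inter_family m C) x <= mu * max_family m (fun i => dist_set (C i) x).

(** Iterates along a sample path of indices: x_{n+1} = T_{idx n} x_n. *)
Fixpoint iterates (T : nat -> X -> X) (idx : nat -> nat) (x0 : X) (n : nat) : X :=
  match n with
  | O => x0
  | S k => T (idx k) (iterates T idx x0 k)
  end.

End Defs.

(* Averagedness gives, for every c in Fix T_i, the strict Fejér inequality
   |T_i x - c|^2 <= |x - c|^2 - a |x - T_i x|^2, so that, taking the infimum over
   c in Z, d_Z(T_i x)^2 <= d_Z(x)^2 - a |x - T_i x|^2; averaging over i costs a factor
   min_i pi_i in front of the residuals.  Fejér monotonicity keeps every iterate in a
   fixed ball around x0, where the regularity of the family and of the operators gives
   d_Z(x)^2 <= mu^2 kappa^2 sum_i |x - T_i x|^2 with constants independent of n.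
   Combining the two bounds yields the rate theta = 1 - a p / (mu^2 kappa^2 + 1). *)

From Stdlib Require Import Reals List Lra Psatz Lia ClassicalEpsilon Classical.
Open Scope R_scope.

Section HilbertAlgebra.
Context {X : HilbertSpace}.

Definition sqnorm (v : X) : R := hinner v v.

Lemma hinner_zero_l (y : X) : hinner hzero y = 0.
Proof.
  pose proof (hinner_add_l _ hzero hzero y) as E.
  rewrite hadd_zero in E. lra.
Qed.

Lemma hinner_opp_l (x y : X) : hinner (hopp x) y = - hinner x y.
Proof.
  pose proof (hinner_add_l _ x (hopp x) y) as E.
  rewrite hadd_opp, hinner_zero_l in E. lra.
Qed.

Lemma hinner_add_r (x y z : X) : hinner x (hadd y z) = hinner x y + hinner x z.
Proof. rewrite !(hinner_sym _ x). apply hinner_add_l. Qed.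

Lemma hinner_opp_r (x y : X) : hinner x (hopp y) = - hinner x y.
Proof. rewrite !(hinner_sym _ x). apply hinner_opp_l. Qed.

Lemma hinner_scal_r a (x y : X) : hinner x (hscal a y) = a * hinner x y.
Proof. rewrite !(hinner_sym _ x). apply hinner_scal_l. Qed.

Ltac hinner_expand := unfold sqnorm, hsub in *;
  repeat rewrite ?hinner_add_l, ?hinner_add_r, ?hinner_opp_l, ?hinner_opp_r,
    ?hinner_scal_l, ?hinner_scal_r in *.

Lemma hsub_diag (c : X) : hsub c c = hzero.
Proof. apply hadd_opp. Qed.

Lemma hsub_zero_r (v : X) : hsub v hzero = v.
Proof.
  pose proof (hadd_opp _ (@hzero X)) as E.
  rewrite hadd_comm, hadd_zero in E.
  unfold hsub. rewrite E. apply hadd_zero.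
Qed.

Lemma sqnorm_ge0 (v : X) : 0 <= sqnorm v.
Proof. apply hinner_pos. Qed.

Lemma hnorm_ge0 (v : X) : 0 <= hnorm v.
Proof. apply sqrt_pos. Qed.

Lemma hnorm_sqr (v : X) : hnorm v ^ 2 = sqnorm v.
Proof. apply pow2_sqrt, hinner_pos. Qed.

Lemma sqnorm_le_sub (x z : X) : sqnorm x <= 2 * sqnorm (hsub x z) + 2 * sqnorm z.
Proof.
  pose proof (sqnorm_ge0 (hsub (hsub x z) z)) as H.
  hinner_expand. rewrite ?(hinner_sym z x) in *. lra.
Qed.

Lemma hnorm_le_of_sqnorm_sub_le (x z : X) b :
  sqnorm (hsub x z) <= b -> hnorm x <= sqrt (2 * b + 2 * sqnorm z).
Proof.
  intros Hb. apply sqrt_le_1_alt.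
  pose proof (sqnorm_le_sub x z). unfold sqnorm in *. lra.
Qed.

Lemma averaged_sqnorm_le (T N : X -> X) lam :
  0 <= lam < 1 -> nonexpansive N ->
  (forall x, T x = hadd (hscal (1 - lam) x) (hscal lam (N x))) ->
  forall x y, sqnorm (hsub (T x) (T y))
              + (1 - lam) * sqnorm (hsub (hsub x (T x)) (hsub y (T y)))
              <= sqnorm (hsub x y).
Proof.
  intros Hlam HN HT x y.
  (* With u = x - y and v = N x - N y, the right side minus the left side is
     lam (|u|^2 - |v|^2) + lam (1 - lam)^2 |u - v|^2. *)
  assert (Hv : sqnorm (hsub (N x) (N y)) <= sqnorm (hsub x y)).
  { apply sqrt_le_0; try apply sqnorm_ge0. apply HN. }
  pose proof (sqnorm_ge0 (hsub (hsub x y) (hsub (N x) (N y)))) as Huv.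
  assert (H1 : 0 <= lam * (sqnorm (hsub x y) - sqnorm (hsub (N x) (N y))))
    by (apply Rmult_le_pos; lra).
  assert (H2 : 0 <= lam * ((1 - lam) * (1 - lam))
                    * sqnorm (hsub (hsub x y) (hsub (N x) (N y)))).
  { apply Rmult_le_pos; [apply Rmult_le_pos; [lra|nra]|exact Huv]. }
  clear Hv Huv. rewrite !HT. hinner_expand.
  rewrite ?(hinner_sym y x), ?(hinner_sym (N x) x), ?(hinner_sym (N y) x),
    ?(hinner_sym (N x) y), ?(hinner_sym (N y) y), ?(hinner_sym (N y) (N x)) in *.
  lra.
Qed.

Lemma averaged_sqnorm_sub_fix (T : X -> X) : averaged_nonexpansive T ->
  exists al, 0 < al /\ forall x c, Fix T c ->
    sqnorm (hsub (T x) c) <= sqnorm (hsub x c) - al * sqnorm (hsub x (T x)).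
Proof.
  intros [lam [N [Hlam [HN HT]]]]. exists (1 - lam). split; [lra|].
  intros x c Hc. pose proof (averaged_sqnorm_le T N lam Hlam HN HT x c) as H.
  unfold Fix in Hc. rewrite Hc, hsub_diag, hsub_zero_r in H. lra.
Qed.

End HilbertAlgebra.
Section Distance.
Context {X : HilbertSpace}.
Variable C : X -> Prop.
Hypothesis C_nonempty : exists c, C c.

Lemma dist_set_glb (x : X) :
  is_glb (fun r => exists c, C c /\ r = hnorm (hsub x c)) (dist_set C x).
Proof.
  destruct C_nonempty as [c0 Hc0]. unfold dist_set. apply epsilon_spec.
  destruct (completeness (fun r => exists c, C c /\ - r = hnorm (hsub x c)))
    as [s [Hub Hlub]].
  - exists 0. intros r [c [_ Hr]]. pose proof (hnorm_ge0 (hsub x c)). lra.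
  - exists (- hnorm (hsub x c0)), c0. split; [exact Hc0|lra].
  - exists (- s). split.
    + intros r [c [Hc Hr]]. enough (- r <= s) by lra.
      apply Hub. exists c. split; [exact Hc|lra].
    + intros b Hb. enough (s <= - b) by lra.
      apply Hlub. intros r [c [Hc Hr]]. enough (b <= - r) by lra.
      apply Hb. exists c. split; [exact Hc|lra].
Qed.

Lemma dist_set_ge0 (x : X) : 0 <= dist_set C x.
Proof. apply (proj2 (dist_set_glb x)). intros r [c [_ ->]]. apply hnorm_ge0. Qed.

Lemma dist_set_le_hnorm (x c : X) : C c -> dist_set C x <= hnorm (hsub x c).
Proof. intros Hc. apply (proj1 (dist_set_glb x)). exists c. auto. Qed.

Lemma dist_set_approx (x : X) eps : 0 < eps ->
  exists c, C c /\ hnorm (hsub x c) < dist_set C x + eps.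
Proof.
  intros Heps. apply NNPP. intros Hnone.
  enough (dist_set C x + eps <= dist_set C x) by lra.
  apply (proj2 (dist_set_glb x)). intros r [c [Hc ->]].
  apply Rnot_lt_le. intros Hlt. apply Hnone. exists c. auto.
Qed.

Lemma dist_set_sqr_approx (x : X) eps : 0 < eps ->
  exists c, C c /\ sqnorm (hsub x c) <= dist_set C x ^ 2 + eps.
Proof.
  intros Heps. set (d := dist_set C x).
  assert (Hd : 0 <= d) by apply dist_set_ge0.
  set (del := Rmin 1 (eps / (2 * d + 1))).
  assert (Hdel1 : del <= 1) by apply Rmin_l.
  assert (Hdel0 : 0 < del).
  { apply Rmin_case; [lra|]. apply Rdiv_lt_0_compat; lra. }
  assert (Hdel : del * (2 * d + 1) <= eps).
  { pose proof (Rmin_r 1 (eps / (2 * d + 1))) as H. fold del in H.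
    apply (Rmult_le_compat_r (2 * d + 1)) in H; [|lra].
    unfold Rdiv in H. rewrite Rmult_assoc, Rinv_l in H; lra. }
  destruct (dist_set_approx x del Hdel0) as [c [Hc Hlt]].
  exists c. split; [exact Hc|].
  pose proof (hnorm_ge0 (hsub x c)). rewrite <- hnorm_sqr. fold d in Hlt. nra.
Qed.

Lemma dist_set_sqr_le (x y : X) a :
  (forall c, C c -> sqnorm (hsub y c) <= sqnorm (hsub x c) - a) ->
  dist_set C y ^ 2 <= dist_set C x ^ 2 - a.
Proof.
  intros Hxy. enough (dist_set C y ^ 2 + a <= dist_set C x ^ 2) by lra.
  apply Rle_plus_epsilon. intros eps Heps.
  destruct (dist_set_sqr_approx x eps Heps) as [c [Hc Hx]].
  assert (Hy : dist_set C y ^ 2 <= sqnorm (hsub y c)).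
  { rewrite <- hnorm_sqr. apply pow_incr.
    split; [apply dist_set_ge0|apply dist_set_le_hnorm, Hc]. }
  specialize (Hxy c Hc). lra.
Qed.

End Distance.

Lemma finite_pos_lower_bound m (P : nat -> R -> Prop) :
  (forall i a b, P i a -> 0 < b <= a -> P i b) ->
  (forall i, (i < m)%nat -> exists a, 0 < a /\ P i a) ->
  exists a, 0 < a /\ forall i, (i < m)%nat -> P i a.
Proof.
  intros Hmono. induction m as [|m IH]; intros HP.
  - exists 1. split; [lra|]. intros; lia.
  - destruct IH as [a [Ha Hall]]; [intros; apply HP; lia|].
    destruct (HP m (Nat.lt_succ_diag_r m)) as [b [Hb Hm]].
    exists (Rmin a b). split; [apply Rmin_case; lra|].
    intros i Hi. destruct (Nat.eq_dec i m) as [->|Hne].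
    + apply (Hmono _ b); [exact Hm|split; [apply Rmin_case; lra|apply Rmin_r]].
    + apply (Hmono _ a); [apply Hall; lia|split; [apply Rmin_case; lra|apply Rmin_l]].
Qed.

Lemma finite_nonneg_upper_bound m (P : nat -> R -> Prop) :
  (forall i a b, P i a -> a <= b -> P i b) ->
  (forall i, (i < m)%nat -> exists a, 0 <= a /\ P i a) ->
  exists a, 0 <= a /\ forall i, (i < m)%nat -> P i a.
Proof.
  intros Hmono. induction m as [|m IH]; intros HP.
  - exists 0. split; [lra|]. intros; lia.
  - destruct IH as [a [Ha Hall]]; [intros; apply HP; lia|].
    destruct (HP m (Nat.lt_succ_diag_r m)) as [b [Hb Hm]].
    exists (Rmax a b). split; [apply Rmax_case; lra|].
    intros i Hi. destruct (Nat.eq_dec i m) as [->|Hne].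
    + apply (Hmono _ b); [exact Hm|apply Rmax_r].
    + apply (Hmono _ a); [apply Hall; lia|apply Rmax_l].
Qed.

Lemma in_seq0 m i : In i (seq 0 m) -> (i < m)%nat.
Proof. rewrite in_seq. lia. Qed.

Lemma sum_family_le m f g :
  (forall i, (i < m)%nat -> f i <= g i) -> sum_family m f <= sum_family m g.
Proof.
  intros Hfg. unfold sum_family.
  assert (Hl : forall i, In i (seq 0 m) -> f i <= g i) by auto using in_seq0.
  clear Hfg. revert Hl. generalize (seq 0 m) as l.
  induction l as [|a l IH]; intros Hl; simpl; [lra|].
  apply Rplus_le_compat; [apply Hl; left; reflexivity|apply IH; intros; apply Hl; right; auto].
Qed.

Lemma sum_family_scal m c f :
  sum_family m (fun i => c * f i) = c * sum_family m f.
Proof.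
  unfold sum_family. generalize (seq 0 m) as l.
  induction l as [|a l IH]; simpl; [ring|rewrite IH; ring].
Qed.

Lemma sum_family_sub m f g :
  sum_family m (fun i => f i - g i) = sum_family m f - sum_family m g.
Proof.
  unfold sum_family. generalize (seq 0 m) as l.
  induction l as [|a l IH]; simpl; [ring|rewrite IH; ring].
Qed.

Lemma sum_family_ge0 m f : (forall i, (i < m)%nat -> 0 <= f i) -> 0 <= sum_family m f.
Proof.
  intros Hf. replace 0 with (0 * sum_family m (fun _ => 1)) at 1 by ring.
  rewrite <- sum_family_scal. apply sum_family_le. intros. rewrite Rmult_0_l. auto.
Qed.

Lemma fold_right_Rmax_ge0 (f : nat -> R) l : 0 <= fold_right Rmax 0 (map f l).
Proof.
  induction l as [|a l IH]; simpl; [lra|]. eapply Rle_trans; [exact IH|apply Rmax_r].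
Qed.

Lemma max_family_sqr_le m f : (forall i, (i < m)%nat -> 0 <= f i) ->
  max_family m f ^ 2 <= sum_family m (fun i => f i ^ 2).
Proof.
  intros Hf. unfold max_family, sum_family.
  assert (Hl : forall i, In i (seq 0 m) -> 0 <= f i) by auto using in_seq0.
  clear Hf. revert Hl. generalize (seq 0 m) as l.
  induction l as [|a l IH]; intros Hl; cbn [map fold_right]; [lra|].
  assert (Ha : 0 <= f a) by (apply Hl; left; reflexivity).
  specialize (IH (fun i Hi => Hl i (or_intror Hi))).
  pose proof (pow2_ge_0 (f a)). pose proof (pow2_ge_0 (fold_right Rmax 0 (map f l))).
  apply Rmax_case; lra.
Qed.

Section Family.
Context {X : HilbertSpace}.
Variables (m : nat) (T : nat -> X -> X).

Lemma averaged_family_sqnorm_sub_fix :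
  (forall i, (i < m)%nat -> averaged_nonexpansive (T i)) ->
  exists al, 0 < al /\ forall i, (i < m)%nat -> forall x c, Fix (T i) c ->
    sqnorm (hsub (T i x) c) <= sqnorm (hsub x c) - al * sqnorm (hsub x (T i x)).
Proof.
  intros Havg. apply finite_pos_lower_bound.
  - intros i a b Ha [Hb Hba] x c Hc. specialize (Ha x c Hc).
    pose proof (sqnorm_ge0 (hsub x (T i x))). nra.
  - intros i Hi. apply averaged_sqnorm_sub_fix, Havg, Hi.
Qed.

Lemma bdd_lin_regular_op_uniform rho : 0 < rho ->
  (forall i, (i < m)%nat -> bdd_lin_regular_op (T i)) ->
  exists ka, 0 <= ka /\ forall i, (i < m)%nat -> forall x, hnorm x <= rho ->
    dist_set (Fix (T i)) x <= ka * hnorm (hsub x (T i x)).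
Proof.
  intros Hrho Hreg. apply finite_nonneg_upper_bound.
  - intros i a b Ha Hab x Hx. specialize (Ha x Hx).
    pose proof (hnorm_ge0 (hsub x (T i x))). nra.
  - intros i Hi. apply (Hreg i Hi rho Hrho).
Qed.

Lemma iterates_sqnorm_sub_le (idx : nat -> nat) (x0 z : X) :
  (forall i, (i < m)%nat -> forall x, sqnorm (hsub (T i x) z) <= sqnorm (hsub x z)) ->
  (forall n, (idx n < m)%nat) ->
  forall n, sqnorm (hsub (iterates T idx x0 n) z) <= sqnorm (hsub x0 z).
Proof.
  intros Hquasi Hidx n. induction n as [|n IH]; simpl; [lra|].
  eapply Rle_trans; [apply Hquasi, Hidx|exact IH].
Qed.

End Family.

Section ExpectedDecrease.
Context {X : HilbertSpace}.
Variables (m : nat) (T : nat -> X -> X) (pi : nat -> R) (al p mu ka : R) (x : X).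
Let Z := inter_family m (fun i => Fix (T i)).
Let residual i := sqnorm (hsub x (T i x)).
Hypothesis Z_nonempty : exists z, Z z.
Hypothesis al_ge0 : 0 <= al.
Hypothesis sqnorm_sub_fix : forall i, (i < m)%nat -> forall c, Fix (T i) c ->
  sqnorm (hsub (T i x) c) <= sqnorm (hsub x c) - al * residual i.
Hypothesis p_ge0 : 0 <= p.
Hypothesis p_le_pi : forall i, (i < m)%nat -> p <= pi i.
Hypothesis sum_pi : sum_family m pi = 1.
Hypothesis dist_inter_le :
  dist_set Z x <= mu * max_family m (fun i => dist_set (Fix (T i)) x).
Hypothesis dist_fix_le : forall i, (i < m)%nat ->
  dist_set (Fix (T i)) x <= ka * hnorm (hsub x (T i x)).

Lemma expected_sq_dist_le :
  sum_family m (fun i => pi i * dist_set Z (T i x) ^ 2)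
  <= dist_set Z x ^ 2 - al * sum_family m (fun i => pi i * residual i).
Proof.
  eapply Rle_trans.
  - apply (sum_family_le m _ (fun i => dist_set Z x ^ 2 * pi i - al * (pi i * residual i))).
    intros i Hi.
    assert (Hstep : dist_set Z (T i x) ^ 2 <= dist_set Z x ^ 2 - al * residual i).
    { apply dist_set_sqr_le; [exact Z_nonempty|].
      intros c Hc. exact (sqnorm_sub_fix i Hi c (Hc i Hi)). }
    pose proof (p_le_pi i Hi). nra.
  - rewrite sum_family_sub, !sum_family_scal, sum_pi. lra.
Qed.

Lemma sq_dist_le_sum_residuals :
  dist_set Z x ^ 2 <= mu ^ 2 * ka ^ 2 * sum_family m residual.
Proof.
  set (M := max_family m (fun i => dist_set (Fix (T i)) x)) in *.
  assert (HM : 0 <= M) by apply fold_right_Rmax_ge0.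
  assert (Hfix : forall i, (i < m)%nat -> 0 <= dist_set (Fix (T i)) x).
  { intros i Hi. apply dist_set_ge0. destruct Z_nonempty as [z Hz]. exists z. apply Hz, Hi. }
  assert (HD : dist_set Z x ^ 2 <= mu ^ 2 * M ^ 2).
  { rewrite <- Rpow_mult_distr. apply pow_incr.
    split; [apply dist_set_ge0, Z_nonempty|exact dist_inter_le]. }
  assert (HMsum : M ^ 2 <= ka ^ 2 * sum_family m residual).
  { eapply Rle_trans; [apply max_family_sqr_le, Hfix|].
    rewrite <- sum_family_scal. apply sum_family_le. intros i Hi.
    unfold residual. rewrite <- hnorm_sqr, <- Rpow_mult_distr.
    apply pow_incr. split; [apply Hfix, Hi|apply dist_fix_le, Hi]. }
  pose proof (pow2_ge_0 mu). nra.
Qed.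

Lemma expected_sq_dist_contraction :
  sum_family m (fun i => pi i * dist_set Z (T i x) ^ 2)
  <= (1 - al * p / (mu ^ 2 * ka ^ 2 + 1)) * dist_set Z x ^ 2.
Proof.
  set (K := mu ^ 2 * ka ^ 2 + 1).
  set (S := sum_family m residual).
  assert (HK : 0 < K) by (unfold K; nra).
  assert (HS : 0 <= S) by (apply sum_family_ge0; intros; apply sqnorm_ge0).
  assert (Hweighted : p * S <= sum_family m (fun i => pi i * residual i)).
  { unfold S. rewrite <- sum_family_scal. apply sum_family_le. intros i Hi.
    pose proof (p_le_pi i Hi). pose proof (sqnorm_ge0 (hsub x (T i x))).
    unfold residual. nra. }
  assert (HpD : p * dist_set Z x ^ 2 <= K * sum_family m (fun i => pi i * residual i)).
  { pose proof sq_dist_le_sum_residuals as HD. fold S in HD.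
    assert (HM : 0 <= mu ^ 2 * ka ^ 2) by (apply Rmult_le_pos; apply pow2_ge_0).
    assert (HMS : mu ^ 2 * ka ^ 2 * (p * S)
                  <= mu ^ 2 * ka ^ 2 * sum_family m (fun i => pi i * residual i))
      by (apply Rmult_le_compat_l; assumption).
    apply Rmult_le_compat_l with (r := p) in HD; [|exact p_ge0].
    assert (0 <= p * S) by nra. unfold K. nra. }
  pose proof expected_sq_dist_le as Hexp.
  assert (al * p / K * dist_set Z x ^ 2 <= al * sum_family m (fun i => pi i * residual i)).
  { unfold Rdiv. apply (Rmult_le_reg_l K); [exact HK|].
    replace (K * (al * p * / K * dist_set Z x ^ 2)) with (al * (p * dist_set Z x ^ 2))
      by (field; lra).
    nra. }
  fold K. lra.
Qed.

End ExpectedDecrease.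

Theorem corollary6p4 (X : HilbertSpace) (m : nat) (T : nat -> X -> X)
  (pi : nat -> R) (x0 : X) :
  (forall i, (i < m)%nat -> averaged_nonexpansive (T i)) ->
  (forall i, (i < m)%nat -> bdd_lin_regular_op (T i)) ->
  (exists z, inter_family m (fun i => Fix (T i)) z) ->
  bdd_lin_regular_family m (fun i => Fix (T i)) ->
  (forall i, (i < m)%nat -> 0 < pi i) ->
  sum_family m pi = 1 ->
  exists theta : R, theta < 1 /\
    forall idx : nat -> nat, (forall n, (idx n < m)%nat) ->
      forall n : nat,
        sum_family m (fun i => pi i *
           (dist_set (inter_family m (fun j => Fix (T j)))
                 (T i (iterates T idx x0 n))) ^ 2)
        <= theta * (dist_set (inter_family m (fun j => Fix (T j)))
                         (iterates T idx x0 n)) ^ 2.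
Proof.
  intros Havg Hreg [z Hz] Hfam Hpi Hsum.
  destruct (averaged_family_sqnorm_sub_fix m T Havg) as [al [Hal Hdec]].
  destruct (finite_pos_lower_bound m (fun i a => a <= pi i)) as [p [Hp Hp_le]].
  { intros; lra. }
  { intros i Hi. exists (pi i). split; [apply Hpi, Hi|lra]. }
  (* Every iterate stays in this ball: the T_i do not move away from z. *)
  set (rho := sqrt (2 * sqnorm (hsub x0 z) + 2 * sqnorm z) + 1).
  assert (Hrho : 0 < rho).
  { pose proof (sqrt_pos (2 * sqnorm (hsub x0 z) + 2 * sqnorm z)). unfold rho. lra. }
  destruct (Hfam rho Hrho) as [mu [_ Hmu]].
  destruct (bdd_lin_regular_op_uniform m T rho Hrho Hreg) as [ka [_ Hka]].
  exists (1 - al * p / (mu ^ 2 * ka ^ 2 + 1)). split.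
  { assert (0 < al * p / (mu ^ 2 * ka ^ 2 + 1)) by (apply Rdiv_lt_0_compat; nra). lra. }
  intros idx Hidx n.
  assert (Hbound : hnorm (iterates T idx x0 n) <= rho).
  { enough (hnorm (iterates T idx x0 n) <= sqrt (2 * sqnorm (hsub x0 z) + 2 * sqnorm z))
      by (unfold rho; lra).
    apply hnorm_le_of_sqnorm_sub_le, (iterates_sqnorm_sub_le m); [|exact Hidx].
    intros i Hi x. pose proof (Hdec i Hi x z (Hz i Hi)).
    pose proof (sqnorm_ge0 (hsub x (T i x))). nra. }
  apply expected_sq_dist_contraction; auto; [exists z; exact Hz|lra|lra].
Qed.
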